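(* Let $X$ be an infinite-dimensional normed vector space over $\mathbb R$, with the metric induced by the norm. Then $h_\infty(X)=\infty$.
   Context: For a metric space $(X,d)$, $\delta>0$, $n\in\mathbb N$, $x_0\in X$: a $\delta$-path of length $n$ starting at $x_0$ is a sequence $(x_0,x_1,\dots,x_n)$ in $X$ with $d(x_i,x_{i+1})\le\delta$ for all $i$. Let $P(n,\delta,x_0)$ be the set of such $\delta$-paths, with distance $\max_i d(x_i,y_i)$ between $(x_i)$ and $(y_i)$. A set is $R$-separated if distinct elements are at distance $\ge R$. Let $s(n,R,\delta,x_0)$ be the supremum of cardinalities of $R$-separated subsets of $P(n,\delta,x_0)$. The coarse entropy of $X$ is $h_\infty(X)=\lim_{\delta\to\infty}\lim_{R\to\infty}\limsup_{n\to\infty}\frac1n\log s(n,R,\delta,x_0)\in[0,\infty]$ (independent of $x_0$); it equals the coarse entropy of the identity map of $X$ (and of any isometric self-embedding of $X$). *)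

From HB Require Import structures.
From mathcomp Require Import all_boot all_order all_algebra.
From mathcomp Require Import all_classical all_reals all_analysis.
Unset Printing Implicit Defensive.
Import Order.TTheory GRing.Theory Num.Theory.
Import numFieldNormedType.Exports.
Local Open Scope classical_set_scope.
Local Open Scope ring_scope.

Section CoarseEntropy.
Variables (R : realType) (X : normedModType R).

Definition infinite_dimensional : Prop :=
  forall s : seq X, exists x : X,
    ~ (exists c : seq R, x = \sum_(i < size s) c`_i *: s`_i).

(* A path of length n is a tuple (x_0, ..., x_n), indexed by 'I_n.+1. *)
Definition is_delta_path (n : nat) (delta : R) (x0 : X) (p : 'I_n.+1 -> X) : Prop :=
  p ord0 = x0 /\
  forall i : nat, (i < n)%N -> `|p (inord i) - p (inord i.+1)| <= delta.

Definition path_dist (n : nat) (p q : 'I_n.+1 -> X) : R :=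
  \big[Num.max/0]_(i < n.+1) `|p i - q i|.

Definition separated_paths (n : nat) (Rs delta : R) (x0 : X)
  (s : seq ('I_n.+1 -> X)) : Prop :=
  (forall k, (k < size s)%N -> is_delta_path n delta x0 (nth (fun _ => x0) s k)) /\
  (forall k l, (k < l < size s)%N ->
     nth (fun _ => x0) s k <> nth (fun _ => x0) s l /\
     Rs <= path_dist n (nth (fun _ => x0) s k) (nth (fun _ => x0) s l)).

Definition sep_number (n : nat) (Rs delta : R) (x0 : X) : \bar R :=
  ereal_sup [set ((size s)%:R)%:E | s in separated_paths n Rs delta x0].

Definition elog (y : \bar R) : \bar R :=
  match y with
  | r%:E => (ln r)%:E
  | +oo%E => +oo%E
  | -oo%E => -oo%E
  end.

Definition growth_rate (Rs delta : R) (x0 : X) : \bar R :=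
  limn_esup (fun n : nat => ((n%:R)^-1)%:E * elog (sep_number n Rs delta x0))%E.

Definition coarse_entropy (x0 : X) : \bar R :=
  lim ((fun delta : R => lim ((fun Rs : R => growth_rate Rs delta x0) @ +oo%R)) @ +oo%R).

End CoarseEntropy.

(* By Riesz's lemma, an infinite-dimensional normed space contains, for every N, vectors
   v_1, ..., v_N of norm at most 1 that are pairwise 1/2 apart. The straight delta-paths
   i |-> x0 + i delta v_k are then pairwise (n delta / 2)-separated at time n, so once
   n delta / 2 >= R there are infinitely many R-separated delta-paths of length n. Hence
   s(n, R, delta, x0) = +oo for all large n, and every limit defining h_oo is +oo. *)
From HB Require Import structures.
From mathcomp Require Import all_boot all_order all_algebra.
From mathcomp Require Import all_classical all_reals all_analysis.
From mathcomp Require Import lra.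
Import Order.TTheory GRing.Theory Num.Theory.
Import numFieldNormedType.Exports.

Set Implicit Arguments.
Unset Strict Implicit.

Local Open Scope classical_set_scope.
Local Open Scope ring_scope.

Section FiniteSpan.
Variables (R : realType) (X : normedModType R).
Implicit Types (s : seq X) (a x y z : X) (k : R).

Definition in_span s z := exists c : seq R, z = \sum_(i < size s) c`_i *: s`_i.

Lemma in_span_nil z : in_span [::] z <-> z = 0.
Proof.
by split=> [[c ->]|->]; [rewrite big_ord0 | exists [::]; rewrite big_ord0].
Qed.

Lemma in_span0 s : in_span s 0.
Proof. by exists [::]; rewrite big1 // => i _; rewrite nth_nil scale0r. Qed.

Lemma in_span_cons a s z :
  in_span (a :: s) z <-> exists k y, in_span s y /\ z = k *: a + y.
Proof.
split=> [[[|c0 c] ->]|[k [y [[c ->] ->]]]].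
- exists 0, 0; split; first exact: in_span0.
  by rewrite big1 ?scale0r ?addr0 // => i _; rewrite nth_nil scale0r.
- exists c0, (\sum_(i < size s) c`_i *: s`_i); split; first by exists c.
  by rewrite big_ord_recl.
- by exists (k :: c); rewrite big_ord_recl.
Qed.

Lemma in_spanD s y1 y2 : in_span s y1 -> in_span s y2 -> in_span s (y1 + y2).
Proof.
elim: s y1 y2 => [|a s IH] y1 y2.
  by move=> /in_span_nil -> /in_span_nil ->; apply/in_span_nil; rewrite addr0.
move=> /in_span_cons [k1 [u1 [h1 ->]]] /in_span_cons [k2 [u2 [h2 ->]]].
apply/in_span_cons; exists (k1 + k2), (u1 + u2); split; first exact: IH.
by rewrite scalerDl addrACA.
Qed.

Lemma in_spanZ s k y : in_span s y -> in_span s (k *: y).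
Proof.
elim: s y => [|a s IH] y.
  by move=> /in_span_nil ->; apply/in_span_nil; rewrite scaler0.
move=> /in_span_cons [k1 [u [hu ->]]]; apply/in_span_cons.
by exists (k * k1), (k *: u); split; [exact: IH | rewrite scalerDr scalerA].
Qed.

Lemma in_span_nth s i : (i < size s)%N -> in_span s s`_i.
Proof.
elim: s i => [|a s IH] [|i] //= hi; apply/in_span_cons.
  by exists 1, 0; rewrite scale1r addr0; split; first exact: in_span0.
by exists 0, s`_i; rewrite scale0r add0r; split; first exact: IH.
Qed.

Definition span_dist s x : R := inf [set `|x - y| | y in in_span s].

Lemma has_inf_span_dist s x : has_inf [set `|x - y| | y in in_span s].
Proof.
split; first by exists `|x - 0|, 0; first exact: in_span0.
by exists 0 => _ [y _ <-].
Qed.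

Lemma span_dist_le s x y : in_span s y -> span_dist s x <= `|x - y|.
Proof. by move=> hy; apply: ge_inf; [case: (has_inf_span_dist s x) | exists y]. Qed.

Lemma le_span_dist s x m :
  (forall y, in_span s y -> m <= `|x - y|) -> m <= span_dist s x.
Proof.
move=> h; apply: lb_le_inf; first by case: (has_inf_span_dist s x).
by move=> _ [y hy <-]; exact: h.
Qed.

Lemma span_dist_lipschitz s x y : span_dist s x <= span_dist s y + `|x - y|.
Proof.
rewrite addrC -lerBlDl; apply: le_span_dist => w hw; rewrite lerBlDl.
exact: le_trans (span_dist_le x hw) (ler_distD y x w).
Qed.

Lemma continuous_span_dist s : continuous (span_dist s).
Proof.
move=> x; apply/cvgrPdist_le => e e0; near=> y.
have xy : `|x - y| <= e by near: y; exact: (cvgrPdist_le _ _).1 (@cvg_id _ _) _ e0.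
have := span_dist_lipschitz s x y; have := span_dist_lipschitz s y x.
by rewrite distrC ler_norml; lra.
Unshelve. all: by end_near. Qed.

Lemma scale_span_dist_le s a y k :
  in_span s y -> `|k| * span_dist s a <= `|k *: a + y|.
Proof.
move=> hy; have [->|k0] := eqVneq k 0; first by rewrite normr0 mul0r.
have -> : k *: a + y = k *: (a - (- k^-1 *: y)).
  by rewrite scalerBr scalerA mulrN divff // scaleN1r opprK.
by rewrite normrZ ler_wpM2l //; apply/span_dist_le/in_spanZ.
Qed.

(* Adding k a with |k| large moves far away from z, and on the remaining
   compact interval of coefficients the positive continuous function c |-> span_dist s (z - c a)
   has a positive minimum (extreme value theorem): this is where finite dimension is used. *)
Lemma span_dist_gt0 s z : ~ in_span s z -> 0 < span_dist s z.
Proof.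
elim: s z => [|a s IH] z zNs.
  apply: lt_le_trans (le_span_dist (m := `|z|) _) => [|y /in_span_nil ->].
    by rewrite normr_gt0; apply/eqP => z0; apply/zNs/in_span_nil.
  by rewrite subr0.
have [aS|aNs] := pselect (in_span s a).
  apply: lt_le_trans (IH z _) (le_span_dist _) => [zs|y /in_span_cons [k [u [hu ->]]]].
    by apply/zNs/in_span_cons; exists 0, z; rewrite scale0r add0r.
  by apply: span_dist_le; apply: in_spanD => //; exact: in_spanZ.
pose g c := span_dist s (z - c *: a).
have g_gt0 c : 0 < g c.
  apply: IH => zcs; apply/zNs/in_span_cons; exists c, (z - c *: a).
  by split=> //; rewrite addrC subrK.
have da0 := IH a aNs; have z0 := normr_ge0 z.
pose M := (`|z| + 1) / span_dist s a.
have M0 : 0 <= M by apply: divr_ge0; lra.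
have gc : {within `[- M, M], continuous g}.
  have gcont : continuous g.
    move=> c; rewrite /g; apply: (@continuous_comp _ _ _ (fun c : R => z - c *: a) (span_dist s)).
      by apply: continuousB; [exact: cvg_cst | exact: scalel_continuous].
    exact: continuous_span_dist.
  by apply: continuous_subspaceT => c; exact: gcont.
have [c _ gmin] := EVT_min (ltac:(lra) : - M <= M) gc.
apply: (lt_le_trans (_ : 0 < Num.min 1 (g c))); first by rewrite lt_min ltr01 g_gt0.
apply: le_span_dist => _ /in_span_cons [k [u [hu ->]]].
rewrite ge_min; have [kM|Mk] := leP `|k| M.
  apply/orP; right; apply: le_trans (gmin k _) _; first by rewrite in_itv /= -ler_norml.
  by rewrite opprD addrA; exact: span_dist_le.
apply/orP; left.
have := scale_span_dist_le a k hu; have := lerB_dist (k *: a + u) z.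
by move: Mk; rewrite ltr_pdivrMr // distrC; lra.
Qed.

Lemma riesz_lemma s x : ~ in_span s x ->
  exists v : X, `|v| <= 1 /\ forall w, in_span s w -> 1/2 <= `|v - w|.
Proof.
move=> xNs; have d0 := span_dist_gt0 xNs.
have [_ [y ys <-] yclose] := inf_adherent d0 (has_inf_span_dist s x).
rewrite -/(span_dist s x) in yclose.
have dle := span_dist_le x ys; set r := `|x - y| in yclose dle *.
have r0 : 0 < r by lra.
have ri : `|r^-1| = r^-1 by rewrite ger0_norm // invr_ge0 ltW.
exists (r^-1 *: (x - y)); split; first by rewrite normrZ ri mulVf ?gt_eqF.
move=> w ws; have -> : r^-1 *: (x - y) - w = r^-1 *: (x - (y + r *: w)).
  by rewrite opprD addrA [in RHS]scalerBr scalerA mulVf ?gt_eqF // scale1r.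
rewrite normrZ ri (mulrC r^-1) ler_pdivlMr //.
have : span_dist s x <= `|x - (y + r *: w)|.
  by apply: span_dist_le; apply: in_spanD => //; exact: in_spanZ.
lra.
Qed.

Lemma infinite_dimensional_separated_seq N : infinite_dimensional R X ->
  exists s : seq X, [/\ size s = N, forall i, (i < N)%N -> `|s`_i| <= 1 &
    forall i j, (i < j < N)%N -> 1/2 <= `|s`_i - s`_j|].
Proof.
move=> Xinf; elim: N => [|N [s [<- s1 s2]]].
  by exists [::]; split => // i j; rewrite ltn0 andbF.
have [x xNs] := Xinf s; have [v [v1 v2]] := riesz_lemma xNs.
exists (v :: s); split => //= [[|i] //= /s1|[|i] [|j] //= ij]; first exact.
  by apply/v2/in_span_nth.
exact: s2.
Qed.

End FiniteSpan.

Section StraightPaths.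
Variables (R : realType) (X : normedModType R).

Definition line_path {n : nat} (delta : R) (x0 v : X) : 'I_n.+1 -> X :=
  fun i => x0 + (i%:R * delta) *: v.

Lemma line_pathB n delta x0 v w (i : 'I_n.+1) :
  line_path delta x0 v i - line_path delta x0 w i = (i%:R * delta) *: (v - w).
Proof. by rewrite /line_path opprD addrACA subrr add0r scalerBr. Qed.

Lemma line_path_is_delta_path n delta x0 v : 0 <= delta -> `|v| <= 1 ->
  is_delta_path R X n delta x0 (line_path delta x0 v).
Proof.
move=> d0 v1; split; first by rewrite /line_path mul0r scale0r addr0.
move=> i lt_in; rewrite /line_path opprD addrACA subrr add0r -scaleNr -scalerDl.
rewrite !inordK ?ltnS ?(ltnW lt_in) // -natr1 mulrDl mul1r opprD addrA subrr add0r.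
by rewrite normrZ normrN ger0_norm //; apply: ler_piMr.
Qed.

Lemma line_path_dist n delta x0 v w : 0 <= delta ->
  n%:R * delta * `|v - w| <= path_dist R X n (line_path delta x0 v) (line_path delta x0 w).
Proof.
move=> d0; apply: le_trans (le_bigmax 0 _ ord_max).
by rewrite line_pathB normrZ ger0_norm // mulr_ge0.
Qed.

Lemma separated_line_paths n Rs delta x0 N : infinite_dimensional R X ->
  0 < delta -> (0 < n)%N -> Rs <= n%:R * delta / 2 ->
  exists s, size s = N /\ separated_paths R X n Rs delta x0 s.
Proof.
move=> Xinf d0 n0 hRs; have [vs [vsN vs1 vs2]] := infinite_dimensional_separated_seq N Xinf.
exists (map (line_path delta x0) vs); rewrite /separated_paths size_map vsN.
split=> //; split=> [k kN|k l /andP [kl lN]].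
  by rewrite (nth_map 0) ?vsN //; apply: line_path_is_delta_path; [exact: ltW | exact: vs1].
have kN := ltn_trans kl lN; rewrite !(nth_map 0) ?vsN //.
have sep : n%:R * delta / 2 <=
    path_dist R X n (line_path delta x0 vs`_k) (line_path delta x0 vs`_l).
  apply: le_trans (line_path_dist _ _ _ _ (ltW d0)).
  apply: ler_wpM2l; first by rewrite mulr_ge0 ?ler0n ?ltW.
  by rewrite -div1r vs2 // kl.
split=> [same|]; last exact: le_trans sep.
have : path_dist R X n (line_path delta x0 vs`_l) (line_path delta x0 vs`_l) <= 0.
  by apply: bigmax_le => // i _; rewrite subrr normr0.
have : 0 < n%:R * delta / 2 by rewrite !mulr_gt0 ?ltr0n.
by move: sep; rewrite same; lra.
Qed.

End StraightPaths.

Section CoarseEntropy.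
Variables (R : realType) (X : normedModType R).
Local Open Scope ereal_scope.

Lemma sep_number_pinfty n Rs delta (x0 : X) : infinite_dimensional R X ->
  (0 < delta)%R -> (0 < n)%N -> (Rs <= n%:R * delta / 2)%R ->
  sep_number R X n Rs delta x0 = +oo.
Proof.
move=> Xinf d0 n0 hRs; apply: eq_infty => r.
have [s [sN sep]] := separated_line_paths x0 (Num.bound `|r|) Xinf d0 n0 hRs.
apply: (@le_trans _ _ (Num.bound `|r|)%:R%:E).
  by rewrite lee_fin; apply/(le_trans (ler_norm r))/ltW/archi_boundP/normr_ge0.
by apply: ereal_sup_ubound; exists s => //; rewrite sN.
Qed.

Lemma growth_rate_pinfty Rs delta (x0 : X) : infinite_dimensional R X ->
  (0 < delta)%R -> growth_rate R X Rs delta x0 = +oo.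
Proof.
move=> Xinf d0; rewrite /growth_rate limn_esup_lim.
apply: (lim_near_cst (@ereal_hausdorff R)); near=> m.
apply/eqP; rewrite -leye_eq; apply: ereal_sup_ubound; exists m => //=.
rewrite sep_number_pinfty //=.
- rewrite mulry gtr0_sg ?mul1e // invr_gt0 ltr0n.
  by near: m; exact: nbhs_infty_gt.
- by near: m; exact: nbhs_infty_gt.
- have : (Rs * 2 / delta <= m%:R)%R by near: m; exact: nbhs_infty_ger.
  by rewrite ler_pdivrMr // => ?; lra.
Unshelve. all: by end_near. Qed.

End CoarseEntropy.

Theorem mainTheorem2 (R : realType) (X : normedModType R) (x0 : X) :
  @infinite_dimensional R X -> @coarse_entropy R X x0 = +oo%E.
Proof.
move=> Xinf; apply: (lim_near_cst (@ereal_hausdorff R)); near=> delta.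
have d0 : 0 < delta by near: delta; exact: nbhs_pinfty_gt.
under eq_fun => Rs do rewrite growth_rate_pinfty //.
exact: (lim_cst (@ereal_hausdorff R)).
Unshelve. all: by end_near. Qed.
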